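(* Let $G$ be a finite, connected, simple $3$-regular graph on more than $6$ vertices that is $4$-ordered. Then every vertex of $G$ has exactly $6$ vertices at distance $2$ from it.
   Context: A simple graph $G$ is called $k$-ordered if for every sequence $v_1,\ldots,v_k$ of $k$ distinct vertices of $G$ there exists a cycle in $G$ containing these $k$ vertices in the specified (cyclic) order. Distance is the usual graph distance (length of a shortest path). *)

From mathcomp Require Import all_boot.
Set Implicit Arguments. Unset Strict Implicit. Unset Printing Implicit Defensive.

Definition simple_graph (T : finType) (e : rel T) : Prop :=
  symmetric e /\ irreflexive e.

Definition regular (T : finType) (e : rel T) (d : nat) : Prop :=
  forall x : T, #|[set y | e x y]| = d.

Definition connected_graph (T : finType) (e : rel T) : Prop :=
  forall x y : T, connect e x y.

Definition is_graph_cycle (T : finType) (e : rel T) (c : seq T) : Prop :=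
  [/\ uniq c, 3 <= size c & cycle e c].

(* k-ordered: every sequence of k distinct vertices lies on some cycle in
   the given cyclic order (i.e. is a subsequence of some rotation of it). *)
Definition k_ordered (T : finType) (e : rel T) (k : nat) : Prop :=
  forall vs : seq T, size vs = k -> uniq vs ->
    exists c : seq T, is_graph_cycle e c /\
      exists i : nat, subseq vs (rot i c).

Definition walk_len (T : finType) (e : rel T) (x y : T) (n : nat) : Prop :=
  exists p : seq T, [/\ path e x p, last x p = y & size p = n].

Definition dist_eq (T : finType) (e : rel T) (x y : T) (n : nat) : Prop :=
  walk_len e x y n /\ forall m, m < n -> ~ walk_len e x y m.

From mathcomp Require Import all_boot.
Set Implicit Arguments. Unset Strict Implicit. Unset Printing Implicit Defensive.

(* Let u1, u2, x1, x2 be distinct with x1 ~ u1 and x2 ~ u2, and take a cycle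
   through them in the cyclic order u1, u2, x1, x2. Neither x_i is next to u_i
   on the cycle, so in a cubic graph the cycle enters and leaves u_i through
   its two other neighbours. If these agree for u1 and u2 (up to u1, u2
   themselves), the cycle is trapped among u1, u2 and their common neighbours
   and never reaches x1. Applied to the third neighbours of the vertices of a
   triangle, resp. of a 4-cycle, this forces a component K4, resp. K_{3,3}, of at
   most 6 vertices. So the girth is at least 5, and the 3 * 2 vertices at
   distance 2 from v are pairwise distinct. *)

Lemma setD1_id (T : finType) (A : {set T}) x : x \notin A -> A :\ x = A.
Proof. by move=> xA; apply/setDidPl; rewrite disjoint_sym disjoints1. Qed.

Section CyclicOrder.
Variable T : eqType.
Implicit Types (x a b o : T) (s t c : seq T).

Definition in_cyclic_order c s := exists i, subseq s (rot i c).

Lemma in_cyclic_order_head c x s : uniq c -> in_cyclic_order c (x :: s) ->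
  exists k t, rot k c = x :: t /\ subseq s t.
Proof.
move=> Uc [i sub].
suff [k [t [E st]]] : exists k t, rot k (rot i c) = x :: t /\ subseq s t.
  by exists (rot_add c i k), t; rewrite -rot_rot_add.
move: (rot i c) (rot_uniq i c) sub; rewrite Uc => c' Uc' sub.
have xc' := mem_subseq sub (mem_head x s); move: Uc' sub.
case/splitPr: xc' => t1 t2 Uc'; rewrite -[x :: s]/([::] ++ x :: s).
rewrite uniq_subseq_pivot // => /andP[_ st2].
exists (size t1), (t2 ++ t1); split; first exact: rot_size_cat.
exact: subseq_trans st2 (prefix_subseq _ _).
Qed.

Lemma in_cyclic_order_rcons c x s : uniq c ->
  in_cyclic_order c (x :: s) -> in_cyclic_order c (rcons s x).
Proof.
move=> Uc /(in_cyclic_order_head Uc)[k [t [E st]]].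
exists (rot_add c k 1); rewrite -rot_rot_add E rot1_cons -!cats1.
exact: cat_subseq.
Qed.

Lemma next_in_cyclic_order c a b o s : uniq c ->
  in_cyclic_order c [:: a, b, o & s] -> next c a != o.
Proof.
move=> Uc /(in_cyclic_order_head Uc)[k [[|h t] [E sub]]] //.
have /andP[_ Uht] : uniq (a :: h :: t) by rewrite -E rot_uniq.
rewrite -(next_rot k Uc) E /= eqxx.
have : uniq [:: b, o & s] := subseq_uniq sub Uht.
rewrite /= inE negb_or => /andP[/andP[bo _] _].
apply: contraTneq sub => Eho; move: Uht; rewrite Eho /= (negbTE bo).
move=> /andP[ot _]; apply/negP => /mem_subseq/(_ o).
by rewrite !inE eqxx orbT (negbTE ot) => /(_ isT).
Qed.

Lemma next_next_neq c x : uniq c -> 2 < size c -> x \in c ->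
  next c (next c x) != x.
Proof.
move=> Uc c3 /rot_to[i t E].
rewrite -!(next_rot i Uc) E.
have : 2 < size (x :: t) by rewrite -E size_rot.
have : uniq (x :: t) by rewrite -E rot_uniq.
case: t {E} => [|h [|h' t]] //=.
rewrite !inE !negb_or => /andP[/and3P[xh xh' _] _] _.
by rewrite eqxx (eq_sym h) (negbTE xh) eqxx eq_sym.
Qed.

Lemma next_neq_prev c x : uniq c -> 2 < size c -> x \in c ->
  next c x != prev c x.
Proof.
move=> Uc c3 xc; apply: contraNneq (next_next_neq Uc c3 xc) => ->.
by rewrite next_prev.
Qed.

End CyclicOrder.

Section CycleNeighbours.
Variable T : finType.
Implicit Types (x : T) (c : seq T).

Definition cycle_nbrs c x : {set T} := [set next c x; prev c x].

Lemma card_cycle_nbrs c x : uniq c -> 2 < size c -> x \in c ->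
  #|cycle_nbrs c x| = 2.
Proof. by move=> Uc c3 xc; rewrite cards2 next_neq_prev. Qed.

Lemma notin_cycle_nbrs c a b o d : uniq c ->
  in_cyclic_order c [:: a; b; o; d] -> o \notin cycle_nbrs c a.
Proof.
move=> Uc ord; have ord' : in_cyclic_order c [:: o; d; a; b].
  exact: in_cyclic_order_rcons Uc (in_cyclic_order_rcons Uc ord).
apply/set2P => -[] E.
  by move: (next_in_cyclic_order Uc ord); rewrite E eqxx.
by move: (next_in_cyclic_order Uc ord'); rewrite E next_prev ?eqxx.
Qed.

Lemma next_cycle_nbrs c u1 u2 s : uniq c -> u1 != u2 ->
  s \in cycle_nbrs c u1 -> s \in cycle_nbrs c u2 -> next c s \in [set u1; u2].
Proof.
move=> Uc u12 /set2P[s1|->]; last by rewrite next_prev ?set21.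
case/set2P => [s2|->]; last by rewrite next_prev ?set22.
by move: u12; rewrite -(prev_next Uc u1) -s1 s2 prev_next ?eqxx.
Qed.

Lemma cycle_next_closed (S : {set T}) c x : uniq c -> x \in c -> x \in S ->
  (forall s, s \in S -> next c s \in S) -> {subset c <= S}.
Proof.
move=> Uc xc xS nextS y; rewrite -(fconnect_cycle (cycle_next Uc) xc).
move=> /iter_findex <-; elim: findex => //= n IH; exact: nextS.
Qed.

Lemma cycle_sub_nbrs c u1 u2 : uniq c -> u1 \in c -> u1 != u2 ->
    cycle_nbrs c u1 :\ u2 = cycle_nbrs c u2 :\ u1 ->
  {subset c <= u1 |: (u2 |: cycle_nbrs c u1)}.
Proof.
move=> Uc u1c u12 E.
have Su1 : u1 \in u1 |: (u2 |: cycle_nbrs c u1) by rewrite setU11.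
have Su2 : u2 \in u1 |: (u2 |: cycle_nbrs c u1) by rewrite !in_setU1 eqxx orbT.
have SB : {subset cycle_nbrs c u1 <= u1 |: (u2 |: cycle_nbrs c u1)}.
  by move=> s sB; rewrite 2!in_setU1 sB !orbT.
have nextS2 : next c u2 \in u1 |: (u2 |: cycle_nbrs c u1).
  case: (next c u2 =P u1) => [-> // | nu1]; apply: SB.
  have : next c u2 \in cycle_nbrs c u2 :\ u1.
    by rewrite in_setD1 set21 andbT; apply/eqP.
  by rewrite -E => /setD1P[].
apply: (cycle_next_closed Uc u1c Su1) => s /setU1P[-> | /setU1P[-> // | sB]].
  exact/SB/set21.
case: (s =P u2) => [-> // | su2].
have : s \in cycle_nbrs c u1 :\ u2 by rewrite in_setD1 sB andbT; apply/eqP.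
rewrite E => /setD1P[_ sB2].
by case/set2P: (next_cycle_nbrs Uc u12 sB sB2) => ->.
Qed.

End CycleNeighbours.

Section Walks.
Variables (T : finType) (e : rel T).

Lemma walk_len0 x y : walk_len e x y 0 <-> x = y.
Proof.
split=> [[p [_ <-]] | ->]; last by exists [::].
by case: p.
Qed.

Lemma walk_lenS x y n :
  walk_len e x y n.+1 <-> exists2 u, e x u & walk_len e u y n.
Proof.
split=> [[[|u p] [pth lst sz]] // | [u exu [p [pth lst sz]]]].
  move: pth lst sz => /= /andP[exu pth] lst [sz].
  by exists u => //; exists p.
by exists (u :: p); rewrite /= exu pth lst sz.
Qed.

Lemma walk_len1 x y : walk_len e x y 1 <-> e x y.
Proof.
split=> [/walk_lenS[u exu /walk_len0 <-] // | exy].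
by apply/walk_lenS; exists y => //; apply/walk_len0.
Qed.

Lemma dist_eq2 x y :
  dist_eq e x y 2 <-> [/\ exists2 u, e x u & e u y, x != y & ~~ e x y].
Proof.
have walk2 : walk_len e x y 2 <-> exists2 u, e x u & e u y.
  split=> [/walk_lenS[u exu /walk_len1 euy] | [u exu euy]]; first by exists u.
  by apply/walk_lenS; exists u => //; apply/walk_len1.
split=> [[/walk2 ex2 short] | [/walk2 ex2 xy nexy]].
  split=> //; first by apply/eqP => xy; apply: (short 0) => //; apply/walk_len0.
  by apply/negP => exy; apply: (short 1) => //; apply/walk_len1.
split=> // -[|[|//]] _; first by move/walk_len0/eqP; rewrite (negbTE xy).
by move/walk_len1; apply/negP.
Qed.

End Walks.

Section CubicGraph.
Variables (T : finType) (e : rel T).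
Hypotheses (esym : symmetric e) (eirr : irreflexive e) (ecubic : regular e 3).

Definition nbrs x := [set y | e x y].

Lemma card_nbrs x : #|nbrs x| = 3.
Proof. exact: ecubic. Qed.

Lemma nbr_neq x y : e x y -> x != y.
Proof. by apply: contraTneq => ->; rewrite eirr. Qed.

Lemma card_nbrsD1 x y : e x y -> #|nbrs x :\ y| = 2.
Proof.
by move=> exy; have := cardsD1 y (nbrs x); rewrite card_nbrs inE exy => -[].
Qed.

Lemma nbrs_nbr u x A : nbrs u = x |: A -> e u x.
Proof. by move=> Nu; have := setU11 x A; rewrite -Nu inE. Qed.

Lemma nbrs3_uniq u x p q : nbrs u = x |: [set p; q] -> uniq [:: u; x; p; q].
Proof.
move=> Nu; have := card_nbrs u; rewrite Nu cardsU1 cards2.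
case: (boolP (x \in [set p; q])) => xpq; case: (boolP (p != q)) => pq //= _.
have : u \notin nbrs u by rewrite inE eirr.
rewrite Nu /= !inE !negb_or in xpq * => /and3P[-> -> ->].
by rewrite xpq pq.
Qed.

Lemma nbrs_eq3 u a b c : e u a -> e u b -> e u c -> uniq [:: a; b; c] ->
  nbrs u = a |: [set b; c].
Proof.
move=> ea eb ec /= /andP[]; rewrite !inE negb_or andbT => abc bc.
apply/eqP; rewrite eq_sym eqEcard card_nbrs cardsU1 cards2 bc !inE negb_or abc.
by rewrite !subUset !sub1set !inE ea eb ec.
Qed.

Lemma third_nbr u p q : e u p -> e u q -> p != q ->
  exists x, nbrs u = x |: [set p; q].
Proof.
move=> eup euq pq.
have : ~~ (nbrs u \subset [set p; q]).
  by apply/negP => /subset_leq_card; rewrite card_nbrs cards2 pq.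
case/subsetPn => x; rewrite inE => ex xpq; exists x.
by apply: nbrs_eq3 => //; rewrite /= !inE pq !andbT; rewrite !inE in xpq.
Qed.

Lemma cycle_nbrs_sub c x : cycle e c -> x \in c -> cycle_nbrs c x \subset nbrs x.
Proof.
move=> Cc xc; apply/subsetP => y /set2P[]->; rewrite inE.
  exact: next_cycle Cc xc.
by rewrite esym; exact: prev_cycle Cc xc.
Qed.

Lemma cycle_nbrs_eq c x y : is_graph_cycle e c -> x \in c -> e x y ->
  y \notin cycle_nbrs c x -> cycle_nbrs c x = nbrs x :\ y.
Proof.
case=> Uc c3 Cc xc exy ny; apply/eqP.
by rewrite eqEcard subsetD1 cycle_nbrs_sub // ny card_cycle_nbrs // card_nbrsD1.
Qed.

Hypothesis econn : connected_graph e.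

Lemma connected_closed (S : seq T) x : x \in S ->
  (forall s, s \in S -> {subset nbrs s <= S}) -> #|T| <= size S.
Proof.
move=> xS clS; apply: leq_trans (card_size S).
apply/subset_leq_card/subsetP => y _.
have clS' : closed e S.
  move=> s t est; apply/idP/idP => [sS | tS].
    by apply: (clS s sS); rewrite inE.
  by apply: (clS t tS); rewrite inE esym.
by rewrite -(closed_connect clS' (econn x y)).
Qed.

Hypothesis eord : k_ordered e 4.

Lemma ordered_nbrsD_neq u1 u2 x1 x2 : uniq [:: u1; u2; x1; x2] ->
  e u1 x1 -> e u2 x2 -> nbrs u1 :\ x1 :\ u2 != nbrs u2 :\ x2 :\ u1.
Proof.
move=> U e1 e2.
have [c [gc ord]] := eord (erefl : size [:: u1; u2; x1; x2] = 4) U.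
have Uc : uniq c by case: gc.
have inc u : u \in [:: u1; u2; x1; x2] -> u \in c.
  by case: ord => i /mem_subseq sub /sub; rewrite mem_rot.
have ord' : in_cyclic_order c [:: u2; x1; x2; u1] := in_cyclic_order_rcons Uc ord.
have [u1c u2c x1c] : [/\ u1 \in c, u2 \in c & x1 \in c].
  by split; apply: inc; rewrite !inE eqxx ?orbT.
have B1 := cycle_nbrs_eq gc u1c e1 (notin_cycle_nbrs Uc ord).
have B2 := cycle_nbrs_eq gc u2c e2 (notin_cycle_nbrs Uc ord').
move: U; rewrite /= !inE !negb_or => /and4P[/and3P[u12 u1x1 _] /andP[u2x1 _] _ _].
apply/eqP => E.
have E' : cycle_nbrs c u1 :\ u2 = cycle_nbrs c u2 :\ u1 by rewrite B1 B2.
move: (cycle_sub_nbrs Uc u1c u12 E' x1c); rewrite B1 !inE eqxx /=.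
by rewrite (eq_sym x1 u1) (eq_sym x1 u2) (negbTE u1x1) (negbTE u2x1).
Qed.

Lemma triangle_third_nbr_eq x y z x' y' :
  nbrs x = x' |: [set y; z] -> nbrs y = y' |: [set x; z] -> x' = y'.
Proof.
move=> Nx Ny; apply/eqP; apply: contraT => x'y'.
move: (nbrs3_uniq Nx) (nbrs3_uniq Ny); rewrite /= !inE !negb_or.
move=> /and4P[/and3P[xx' xy xz] /andP[x'y x'z] _ _].
move=> /and4P[/and3P[yy' _ yz] /andP[y'x y'z] _ _].
have U : uniq [:: x; y; x'; y'].
  by rewrite /= !inE !negb_or xy xx' (eq_sym x y') y'x (eq_sym y x') x'y yy' x'y'.
move: (ordered_nbrsD_neq U (nbrs_nbr Nx) (nbrs_nbr Ny)).
by rewrite Nx Ny !setU1K ?eqxx // !inE ?negb_or ?xz ?yz ?y'x ?y'z ?x'y ?x'z.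
Qed.

Lemma square_third_nbr_eq u1 u2 p q x1 x2 : ~~ e u1 u2 -> u1 != u2 ->
  nbrs u1 = x1 |: [set p; q] -> nbrs u2 = x2 |: [set p; q] -> x1 = x2.
Proof.
move=> n12 u12 N1 N2; apply/eqP; apply: contraT => x12.
move: (nbrs3_uniq N1) (nbrs3_uniq N2); rewrite /= !inE !negb_or.
move=> /and4P[/and3P[u1x1 u1p u1q] /andP[x1p x1q] _ _].
move=> /and4P[/and3P[u2x2 u2p u2q] /andP[x2p x2q] _ _].
have e1 := nbrs_nbr N1; have e2 := nbrs_nbr N2.
have u2x1 : u2 != x1 by apply: contraNneq n12 => ->.
have u1x2 : u1 != x2 by apply: contraNneq n12 => ->; rewrite esym.
have U : uniq [:: u1; u2; x1; x2].
  by rewrite /= !inE !negb_or u12 u1x1 u1x2 u2x1 u2x2 x12.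
move: (ordered_nbrsD_neq U e1 e2); rewrite N1 N2 !setU1K ?setD1_id ?eqxx //;
  by rewrite !inE negb_or; apply/andP.
Qed.

Hypothesis ebig : 6 < #|T|.

Lemma no_triangle x y z : e x y -> e y z -> ~~ e x z.
Proof.
move=> exy eyz; apply/negP => exz.
have [eyx ezx ezy] : [/\ e y x, e z x & e z y] by split; rewrite esym.
have [x' Nx] := third_nbr exy exz (nbr_neq eyz).
have [y' Ny] := third_nbr eyx eyz (nbr_neq exz).
have [z' Nz] := third_nbr ezx ezy (nbr_neq exy).
have x'y' := triangle_third_nbr_eq Nx Ny; rewrite -x'y' in Ny.
rewrite [[set y; z]]setUC in Nx.
have x'z' := triangle_third_nbr_eq Nx Nz; rewrite -x'z' in Nz.
have Uxyz : uniq [:: x; y; z].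
  by rewrite /= !inE negb_or (nbr_neq exy) (nbr_neq exz) (nbr_neq eyz).
have Nx' : nbrs x' = x |: [set y; z].
  apply: (nbrs_eq3 _ _ _ Uxyz); rewrite esym.
  - exact: nbrs_nbr Nx.
  - exact: nbrs_nbr Ny.
  - exact: nbrs_nbr Nz.
have cl s : s \in [:: x; y; z; x'] -> {subset nbrs s <= [:: x; y; z; x']}.
  rewrite !inE => /or4P[] /eqP-> t; rewrite ?Nx ?Ny ?Nz ?Nx' !inE;
  by move=> /or3P[]->; rewrite ?orbT.
by have := leq_trans ebig (connected_closed (mem_head x _) cl).
Qed.

Lemma no_4cycle u1 u2 p q : u1 != u2 ->
  e u1 p -> e u1 q -> e u2 p -> e u2 q -> p = q.
Proof.
move=> u12 e1p e1q e2p e2q; apply/eqP; apply: contraT => pq.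
have [ep1 ep2 eq1 eq2] : [/\ e p u1, e p u2, e q u1 & e q u2].
  by split; rewrite esym.
have [x N1] := third_nbr e1p e1q pq.
have [x2 N2] := third_nbr e2p e2q pq.
have xx2 := square_third_nbr_eq (no_triangle e1p ep2) u12 N1 N2.
rewrite -xx2 in N2.
have [y Np] := third_nbr ep1 ep2 u12.
have [y2 Nq] := third_nbr eq1 eq2 u12.
have yy2 := square_third_nbr_eq (no_triangle ep1 e1q) pq Np Nq.
rewrite -yy2 in Nq.
have ex1 : e x u1 by rewrite esym (nbrs_nbr N1).
have ex2 : e x u2 by rewrite esym (nbrs_nbr N2).
have [d Nx] := third_nbr ex1 ex2 u12.
have /andP[_ Uxpq] := nbrs3_uniq N1.
have px : p != x.
  by rewrite eq_sym; move: Uxpq; rewrite /= !inE negb_or => /andP[/andP[]].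
have npx : ~~ e p x := no_triangle ep1 (nbrs_nbr N1).
have yd := square_third_nbr_eq npx px Np Nx; rewrite -yd in Nx.
have Ny : nbrs y = x |: [set p; q].
  apply: (nbrs_eq3 _ _ _ Uxpq); rewrite esym.
  - exact: nbrs_nbr Nx.
  - exact: nbrs_nbr Np.
  - exact: nbrs_nbr Nq.
have cl s : s \in [:: u1; u2; p; q; x; y] ->
    {subset nbrs s <= [:: u1; u2; p; q; x; y]}.
  rewrite !inE => /or4P[| | | /or3P[]] /eqP-> t;
  rewrite ?N1 ?N2 ?Np ?Nq ?Nx ?Ny !inE;
  by move=> /or3P[]->; rewrite ?orbT.
by have := leq_trans ebig (connected_closed (mem_head u1 _) cl).
Qed.

Definition nbrs2 v := \bigcup_(u in nbrs v) (nbrs u :\ v).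

Lemma mem_nbrs2 v w : w \in nbrs2 v <-> dist_eq e v w 2.
Proof.
split=> [/bigcupP[u] | /dist_eq2[[u evu euw] vw _]].
  rewrite !inE => evu /andP[wv euw]; apply/dist_eq2.
  by split; [exists u | rewrite eq_sym | exact: no_triangle evu euw].
by apply/bigcupP; exists u; rewrite !inE // euw eq_sym vw.
Qed.

Lemma nbrsD1_disjoint v u u' : e v u -> e v u' -> u != u' ->
  (nbrs u :\ v) :&: (nbrs u' :\ v) = set0.
Proof.
move=> evu evu' uu'; apply/setP => t; rewrite !inE.
apply/negP => /and3P[/andP[tv eut] _ eu't]; move: tv.
by rewrite -(no_4cycle (p := v) uu' _ eut _ eu't) ?eqxx // esym.
Qed.

Lemma card_nbrs2 v : #|nbrs2 v| = 6.
Proof.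
have /card_gt0P[a] : 0 < #|nbrs v| by rewrite card_nbrs.
rewrite inE => eva.
have /card_gt0P[b] : 0 < #|nbrs v :\ a| by rewrite card_nbrsD1.
rewrite !inE => /andP[ba evb].
have ab : a != b by rewrite eq_sym.
have [c Nv] := third_nbr eva evb ab.
have evc := nbrs_nbr Nv.
have cab : c \notin [set a; b].
  by move: (nbrs3_uniq Nv); rewrite /= !inE => /and3P[].
have [ca cb] : c != a /\ c != b by move: cab; rewrite !inE negb_or => /andP.
have card2 u : e v u -> #|nbrs u :\ v| = 2.
  by move=> evu; rewrite card_nbrsD1 // esym.
rewrite /nbrs2 Nv big_setU1 // big_setU1 ?in_set1 // big_set1.
rewrite cardsU setIUr !nbrsD1_disjoint // setU0 cards0 subn0.
by rewrite cardsU nbrsD1_disjoint // cards0 subn0 !card2.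
Qed.

End CubicGraph.

Theorem corollary2p2 (T : finType) (e : rel T) :
  simple_graph e -> connected_graph e -> regular e 3 -> 6 < #|T| ->
  k_ordered e 4 ->
  forall v : T, exists S : {set T},
    #|S| = 6 /\ (forall w : T, w \in S <-> dist_eq e v w 2).
Proof.
move=> [esym eirr] econn ecubic ebig eord v.
exists (nbrs2 e v); split; first exact: card_nbrs2.
by move=> w; apply: mem_nbrs2.
Qed.
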